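(* Let $p_1,p_2\in\mathbb{Z}^3$ be distinct, and let $\pi_1,\pi_2$ be two distinct integer affine planes in $\mathbb{R}^3$, both containing the line through $p_1$ and $p_2$ and neither containing the origin $O$. Then for arbitrary $p_3\in\pi_1\setminus\pi_2$ and $p_4\in\pi_2\setminus\pi_1$, \[ |\omega(p_1,p_2;p_3,p_4)|=\frac{{\rm Isin}(\pi_1,\pi_2)}{{\rm I}\ell(p_1,p_2)\,{\rm Id}(O,\pi_1)\,{\rm Id}(O,\pi_2)} . \]
   Context: $\omega(p_1,p_2;p_3,p_4)=\det(p_2-p_1,p_3-p_1,p_4-p_1)/(\det(p_1,p_2,p_3)\det(p_1,p_2,p_4))$, where $\det(u,v,w)$ is the determinant of the matrix with columns $u,v,w$. An integer plane is an affine plane containing a full-rank integer sublattice. ${\rm I}\ell(p,q)$ (integer length) is the number of integer points in the interior of segment $pq$ plus one. ${\rm Id}(p,\pi)$ (integer distance from integer point $p$ to integer plane $\pi$) is the index of the sublattice generated by all integer vectors with endpoints in $\{p\}\cup\pi$ in the lattice of integer vectors of the affine span of $p$ and $\pi$. ${\rm Isin}(\pi_1,\pi_2)$ (integer sine) is the index of the sublattice generated by all integer vectors of $\pi_1$ and of $\pi_2$ in the lattice of integer vectors of the affine span of $\pi_1\cup\pi_2$. *)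

From HB Require Import structures.
From mathcomp Require Import all_boot all_order all_algebra.
From mathcomp Require Import boolp classical_sets reals.
Set Implicit Arguments. Unset Strict Implicit. Unset Printing Implicit Defensive.
Import Order.TTheory GRing.Theory Num.Theory.
Local Open Scope ring_scope.
Local Open Scope classical_set_scope.

Section IntegerGeometry.
Variable R : realType.
Local Notation vec := 'rV[R]_3.

Definition int_pt (x : vec) : Prop := forall i : 'I_3, x 0 i \is a Num.int.

Definition det3 (u v w : vec) : R :=
  \det (\matrix_(i < 3, j < 3)
          (if (j : nat) == 0%N then u 0 i else if (j : nat) == 1%N then v 0 i else w 0 i)).

Definition omega (p1 p2 p3 p4 : vec) : R :=
  det3 (p2 - p1) (p3 - p1) (p4 - p1) / (det3 p1 p2 p3 * det3 p1 p2 p4).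

Definition lin_indep2 (u v : vec) : Prop :=
  forall a b : R, a *: u + b *: v = 0 -> a = 0 /\ b = 0.

Definition affine_plane (P : set vec) : Prop :=
  exists q u v : vec, lin_indep2 u v /\
    P = [set x | exists s t : R, x = q + s *: u + t *: v].

Definition integer_plane (P : set vec) : Prop :=
  affine_plane P /\
  exists q u v : vec, int_pt q /\ int_pt u /\ int_pt v /\ lin_indep2 u v /\
    forall a b : int, P (q + a%:~R *: u + b%:~R *: v).

Definition line_through (p q : vec) : set vec :=
  [set x | exists t : R, x = p + t *: (q - p)].

Definition has_card (S : set vec) (n : nat) : Prop :=
  exists f : 'I_n -> vec, injective f /\ range f = S.

Definition open_seg_int_pts (p q : vec) : set vec :=
  [set x | int_pt x /\ exists t : R, 0 < t < 1 /\ x = p + t *: (q - p)].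

Definition Il (p q : vec) : nat :=
  (xget 0%N [set n | has_card (open_seg_int_pts p q) n]).+1.

Definition zspan (S : set vec) : set vec :=
  [set x | exists n (c : 'I_n -> int) (w : 'I_n -> vec),
     (forall i, S (w i)) /\ x = \sum_(i < n) (w i) *~ (c i)].

Definition aff_span (S : set vec) : set vec :=
  [set x | exists n (c : 'I_n -> R) (w : 'I_n -> vec),
     (forall i, S (w i)) /\ \sum_(i < n) c i = 1 /\ x = \sum_(i < n) c i *: w i].

Definition span_int_lattice (S : set vec) : set vec :=
  [set v | int_pt v /\ exists x y, aff_span S x /\ aff_span S y /\ v = x - y].

Definition int_vecs_in (S : set vec) : set vec :=
  [set v | exists x y, S x /\ S y /\ int_pt x /\ int_pt y /\ v = x - y].

Definition is_index (L M : set vec) (n : nat) : Prop :=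
  exists r : 'I_n -> vec, (forall i, M (r i)) /\
    forall m, M m -> exists! i, L (m - r i).

Definition lat_index (L M : set vec) : nat :=
  xget 0%N [set n | is_index L M n].

Definition Id (p : vec) (P : set vec) : nat :=
  lat_index (zspan (int_vecs_in ([set p] `|` P))) (span_int_lattice ([set p] `|` P)).

Definition Isin (P1 P2 : set vec) : nat :=
  lat_index (zspan (int_vecs_in P1 `|` int_vecs_in P2)) (span_int_lattice (P1 `|` P2)).

End IntegerGeometry.

(* Take primitive integer normals [n1], [n2] of the two planes, with integer [h_i] such that
   [n_i . h_i = 1], and write [p2 - p1 = g e] with [e] primitive and [e . f = 1] for an integer
   [f]; then [Il(p1, p2) = g].  For a primitive integer [n], the integer vectors [x] with
   [n . x] in [c Z] form a sublattice of index [|c|].  The lattices defining [Id(O, pi_i)] and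
   [Isin(pi1, pi2)] are of this form, with [c = n_i . p1] and [c = n1 . (n2 x f)] respectively:
   for [Isin] because [(h2, e, n2 x f)] is a unimodular basis whose last two vectors span the
   integer vectors of the direction of [pi2].  Expanding the three determinants of [omega] in
   the same bases gives [omega = n1 . (n2 x f) / (g (n1 . p1) (n2 . p1))]. *)

From HB Require Import structures.
From mathcomp Require Import all_boot all_order all_algebra.
From mathcomp Require Import boolp classical_sets reals.
From mathcomp Require Import ring lra.
Set Implicit Arguments. Unset Strict Implicit.
Import Order.TTheory GRing.Theory Num.Theory.
Local Open Scope ring_scope.
Local Open Scope classical_set_scope.

Section IntegerPlanes.
Variable R : realType.
Local Notation vec := 'rV[R]_3.

(** * Vector algebra in R^3 *)

Definition i0 : 'I_3 := @Ordinal 3 0 isT.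
Definition i1 : 'I_3 := @Ordinal 3 1 isT.
Definition i2 : 'I_3 := @Ordinal 3 2 isT.

Definition mkv (a b c : R) : vec :=
  \row_(j < 3) (if (j : nat) == 0%N then a else if (j : nat) == 1%N then b else c).

Definition dot (x y : vec) : R := x 0 i0 * y 0 i0 + x 0 i1 * y 0 i1 + x 0 i2 * y 0 i2.

Definition cross (u v : vec) : vec :=
  mkv (u 0 i1 * v 0 i2 - u 0 i2 * v 0 i1) (u 0 i2 * v 0 i0 - u 0 i0 * v 0 i2)
      (u 0 i0 * v 0 i1 - u 0 i1 * v 0 i0).

Definition triple (u v w : vec) : R := dot u (cross v w).

Lemma mkv0 a b c : mkv a b c 0 i0 = a. Proof. by rewrite mxE. Qed.
Lemma mkv1 a b c : mkv a b c 0 i1 = b. Proof. by rewrite mxE. Qed.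
Lemma mkv2 a b c : mkv a b c 0 i2 = c. Proof. by rewrite mxE. Qed.

Lemma ord3P (P : 'I_3 -> Prop) : P i0 -> P i1 -> P i2 -> forall i, P i.
Proof.
move=> h0 h1 h2 [[|[|[|//]]] Hi].
- by rewrite (_ : Ordinal Hi = i0) //; apply/val_inj.
- by rewrite (_ : Ordinal Hi = i1) //; apply/val_inj.
- by rewrite (_ : Ordinal Hi = i2) //; apply/val_inj.
Qed.

Lemma vec3P (x y : vec) :
  x 0 i0 = y 0 i0 -> x 0 i1 = y 0 i1 -> x 0 i2 = y 0 i2 -> x = y.
Proof. by move=> h0 h1 h2; apply/rowP; apply: ord3P. Qed.

Ltac coords := rewrite /triple /dot /cross ?(mkv0, mkv1, mkv2, mxE).
Ltac vec_ring := apply: vec3P; coords; ring.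

Lemma det3E u v w : det3 u v w = triple u v w.
Proof.
rewrite /det3 (expand_det_row _ ord0) !big_ord_recl big_ord0 /cofactor.
rewrite !(expand_det_row _ ord0) !big_ord_recl !big_ord0 /cofactor !det_mx11.
rewrite !mxE /=.
have E0 : (ord0 : 'I_3) = i0 by apply/val_inj.
have E1 : (lift ord0 ord0 : 'I_3) = i1 by apply/val_inj.
have E2 : (lift ord0 (lift ord0 0) : 'I_3) = i2 by apply/val_inj.
rewrite E2 E1 E0 /bump /= expr0 expr1 ?expr2; coords; ring.
Qed.

Lemma dotC x y : dot x y = dot y x. Proof. coords; ring. Qed.
Lemma dot0r x : dot x 0 = 0. Proof. coords; ring. Qed.
Lemma dotDr x y z : dot x (y + z) = dot x y + dot x z. Proof. coords; ring. Qed.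
Lemma dotBr x y z : dot x (y - z) = dot x y - dot x z. Proof. coords; ring. Qed.
Lemma dotZr a x y : dot x (a *: y) = a * dot x y. Proof. coords; ring. Qed.
Lemma dotZl a x y : dot (a *: x) y = a * dot x y. Proof. coords; ring. Qed.
Lemma dotDl x y z : dot (x + y) z = dot x z + dot y z. Proof. coords; ring. Qed.

Lemma dot_crossl u v : dot u (cross u v) = 0. Proof. coords; ring. Qed.

Lemma dotrr_eq0 x : (dot x x == 0) = (x == 0).
Proof.
apply/eqP/eqP => [|->]; last exact: dot0r.
rewrite /dot => h.
by apply: vec3P; rewrite mxE; nra.
Qed.

Lemma triple_cyclic u v w : triple u v w = triple w u v. Proof. coords; ring. Qed.

Lemma triple_crossr h e n f :
  triple h e (cross n f) = dot h n * dot e f - dot h f * dot e n.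
Proof. coords; ring. Qed.

Lemma triple_shift p u v : triple p (p + u) (p + v) = triple p u v.
Proof. coords; ring. Qed.

Lemma triple_Zl a u v w : triple (a *: u) v w = a * triple u v w.
Proof. coords; ring. Qed.

Lemma triple_Zm a u v w : triple u (a *: v) w = a * triple u v w.
Proof. coords; ring. Qed.

Lemma cramer a b c x :
  triple a b c *: x = triple x b c *: a + triple a x c *: b + triple a b x *: c.
Proof. vec_ring. Qed.

Lemma dot_cramer a b c m x : triple a b c * dot m x =
  triple x b c * dot m a + triple a x c * dot m b + triple a b x * dot m c.
Proof. coords; ring. Qed.

Lemma cross_cross u v : cross u (cross u v) = dot u v *: u - dot u u *: v.
Proof. vec_ring. Qed.

Lemma triple_dot_cross u v w : triple u v w = dot (cross u v) w.
Proof. coords; ring. Qed.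

Lemma cross_orth_parallel u v w : dot (cross u v) (cross u v) *: w =
  dot (cross u v) w *: cross u v - dot u w *: cross (cross u v) v
  + dot v w *: cross (cross u v) u.
Proof. vec_ring. Qed.

Lemma triple_orth a b c n h : dot n b = 0 -> dot n c = 0 -> dot n h = 1 ->
  triple a b c = dot n a * triple h b c.
Proof. by move=> nb nc nh; have := dot_cramer h b c n a; rewrite nb nc nh; lra. Qed.

Lemma triple_orth_basis n h e f : dot n e = 0 -> dot n h = 1 -> dot e f = 1 ->
  triple h e (cross n f) = 1.
Proof. by move=> ne nh ef; rewrite triple_crossr (dotC h n) (dotC e n) nh ne ef; ring. Qed.

(* [h, e, n x f] is a unimodular basis in which [e] and [n x f] span the plane [n^perp] *)
Lemma dot_orth_basis n h e f m v : dot n e = 0 -> dot n h = 1 -> dot e f = 1 ->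
  dot m e = 0 -> dot n v = 0 -> dot m v = triple h e v * dot m (cross n f).
Proof.
move=> ne nh ef me nv.
have basis := triple_orth_basis ne nh ef.
have tv : triple v e (cross n f) = 0.
  by rewrite (triple_orth _ ne (dot_crossl n f) nh) nv mul0r.
by have := dot_cramer h e (cross n f) m v; rewrite basis tv me; lra.
Qed.

Lemma dot_orth_basis_neq0 n h e f m v : dot n e = 0 -> dot n h = 1 -> dot e f = 1 ->
  dot m e = 0 -> dot n v = 0 -> dot m v != 0 ->
  triple h e v != 0 /\ dot m (cross n f) != 0.
Proof.
move=> ne nh ef me nv.
by rewrite (dot_orth_basis ne nh ef me nv) mulf_eq0 negb_or => /andP.
Qed.

(** * Integer vectors and integer planes *)

Lemma int_ptD (x y : vec) : int_pt x -> int_pt y -> int_pt (x + y).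
Proof. by move=> hx hy i; rewrite mxE rpredD. Qed.
Lemma int_pt0 : int_pt (0 : vec).
Proof. by move=> i; rewrite mxE. Qed.
Lemma int_ptB (x y : vec) : int_pt x -> int_pt y -> int_pt (x - y).
Proof. by move=> hx hy i; rewrite !mxE rpredB. Qed.
Lemma int_ptZ a (x : vec) : a \is a Num.int -> int_pt x -> int_pt (a *: x).
Proof. by move=> ha hx i; rewrite mxE rpredM. Qed.
Lemma int_pt_mkv a b c : a \is a Num.int -> b \is a Num.int -> c \is a Num.int ->
  int_pt (mkv a b c).
Proof. by move=> ha hb hc; apply: ord3P; rewrite ?mkv0 ?mkv1 ?mkv2. Qed.
Lemma int_pt_cross (x y : vec) : int_pt x -> int_pt y -> int_pt (cross x y).
Proof.
move=> Ix Iy; move: (Ix i0) (Ix i1) (Ix i2) (Iy i0) (Iy i1) (Iy i2) => *.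
by apply: int_pt_mkv; rewrite ?(rpredB, rpredM).
Qed.
Lemma int_dot (x y : vec) : int_pt x -> int_pt y -> dot x y \is a Num.int.
Proof. by move=> Ix Iy; rewrite /dot ?(rpredD, rpredM). Qed.
Lemma int_triple (x y z : vec) :
  int_pt x -> int_pt y -> int_pt z -> triple x y z \is a Num.int.
Proof. by move=> Ix Iy Iz; apply/int_dot/int_pt_cross. Qed.

(* [g] is the gcd of the coordinates of [w]; Bezout coefficients give [f] *)
Lemma primitive_decomposition (w : vec) : int_pt w -> w != 0 ->
  exists (g : nat) (e f : vec), [/\ (0 < g)%N, int_pt e, int_pt f,
     w = g%:R *: e & dot e f = 1].
Proof.
move=> Iw wn0.
move: (Iw i0) (Iw i1) (Iw i2) => /intrP[a ha] /intrP[b hb] /intrP[c hc].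
pose G := gcdz (gcdz a b) c.
have Ga : (G %| a)%Z := dvdz_trans (dvdz_gcdl _ _) (dvdz_gcdl _ _).
have Gb : (G %| b)%Z := dvdz_trans (dvdz_gcdl _ _) (dvdz_gcdr _ _).
have Gc : (G %| c)%Z := dvdz_gcdr _ _.
have G0 : G != 0.
  apply: contra wn0; rewrite /G !gcdz_eq0 => /andP[/andP[/eqP a0 /eqP b0] /eqP c0].
  by apply/eqP; apply: vec3P; rewrite ?ha ?hb ?hc ?a0 ?b0 ?c0 mxE.
have [u [v Huv]] := Bezoutz a b.
have [s [t Hst]] := Bezoutz (gcdz a b) c.
exists `|G|%N, (mkv (a %/ G)%Z%:~R (b %/ G)%Z%:~R (c %/ G)%Z%:~R),
  (mkv (s * u)%:~R (s * v)%:~R t%:~R); split.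
- by rewrite absz_gt0.
- by apply: int_pt_mkv; apply: intr_int.
- by apply: int_pt_mkv; apply: intr_int.
- have GE : G = (`|G|%N)%:Z by [].
  apply: vec3P; rewrite mxE ?mkv0 ?mkv1 ?mkv2 -[_%:R]/((`|G|%N)%:Z%:~R) -GE -intrM;
    by rewrite mulrC divzK.
- rewrite /dot !mkv0 !mkv1 !mkv2 -!intrM -!intrD.
  suff -> : (a %/ G)%Z * (s * u) + (b %/ G)%Z * (s * v) + (c %/ G)%Z * t = 1 by [].
  have HG : G = s * (u * a + v * b) + t * c by rewrite Huv Hst.
  apply: (mulfI G0); rewrite mulr1 [RHS]HG.
  move: (divzK Ga) (divzK Gb) (divzK Gc).
  set a' := (a %/ G)%Z; set b' := (b %/ G)%Z; set c' := (c %/ G)%Z => ea eb ec.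
  by rewrite -ea -eb -ec; ring.
Qed.

Lemma lin_indep2_cross u v : lin_indep2 u v -> cross u v != 0.
Proof.
move=> li; apply/eqP => uv0.
have : dot u v *: u + (- dot u u) *: v = 0.
  by rewrite scaleNr -cross_cross uv0; vec_ring.
move=> /li[_ /eqP]; rewrite oppr_eq0 dotrr_eq0 => /eqP u0.
have := li 1 0; rewrite u0 scaler0 scale0r addr0 => /(_ erefl)[/eqP].
by rewrite oner_eq0.
Qed.

Lemma span2_orth u v y : lin_indep2 u v ->
  (exists s t, y = s *: u + t *: v) <-> dot (cross u v) y = 0.
Proof.
move=> li; split => [[s [t ->]]|hy]; first by coords; ring.
set N := cross u v in hy.
have NN : dot N N != 0 by rewrite dotrr_eq0 lin_indep2_cross.
have := cramer u v N y.
rewrite [triple u v N]triple_dot_cross [triple u v y]triple_dot_cross -/N hy scale0r addr0.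
move=> H; exists (triple y v N / dot N N), (triple u y N / dot N N).
rewrite -[LHS](scalerK NN) H scalerDr !scalerA.
by rewrite ![(dot N N)^-1 * _]mulrC.
Qed.

Lemma orth_parallel N u v : N != 0 -> cross u v != 0 -> dot N u = 0 -> dot N v = 0 ->
  forall y, dot N y = 0 <-> dot (cross u v) y = 0.
Proof.
move=> N0 uv0 Nu Nv y.
have := cross_orth_parallel u v N.
rewrite (dotC u) (dotC v) Nu Nv !scale0r subr0 addr0.
set M := cross u v => par.
have MM : dot M M != 0 by rewrite dotrr_eq0.
have MN : dot M N != 0.
  apply: contra N0 => /eqP MN0.
  by move: par; rewrite MN0 scale0r => /eqP; rewrite scaler_eq0 (negbTE MM).
have := congr1 (dot^~ y) par; rewrite /= !dotZl => E.
split => H; move: E; rewrite H mulr0.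
  by move=> /esym /eqP; rewrite mulf_eq0 (negbTE MN) => /eqP.
by move=> /eqP; rewrite mulf_eq0 (negbTE MM) => /eqP.
Qed.

Lemma integer_plane_normal (P : set vec) p : integer_plane P -> P p ->
  exists n h : vec, [/\ int_pt n, int_pt h, dot n h = 1 &
     forall x, P x <-> dot n x = dot n p].
Proof.
case=> [[q' [u' [v' [li' ->]]]] [q [u [v [Iq [Iu [Iv [li Hlat]]]]]]]] Pp.
set N' := cross u' v'.
have inP x : (exists s t, x = q' + s *: u' + t *: v') <-> dot N' (x - q') = 0.
  rewrite -span2_orth //.
  split=> -[s [t Hx]]; exists s, t; first by rewrite Hx; vec_ring.
  by rewrite -addrA -Hx addrC subrK.
have Nlat a b : dot N' (q + a%:~R *: u + b%:~R *: v - q') = 0 by apply/inP/Hlat.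
have N'u : dot N' u = 0.
  by move: (Nlat 1 0) (Nlat 0 0); rewrite !dotBr !dotDr !dotZr ?mulr1z ?mulr0z; lra.
have N'v : dot N' v = 0.
  by move: (Nlat 0 1) (Nlat 0 0); rewrite !dotBr !dotDr !dotZr ?mulr1z ?mulr0z; lra.
have orth := orth_parallel (lin_indep2_cross li') (lin_indep2_cross li) N'u N'v.
have [g [n [h [gpos In Ih NE nh]]]] :=
  primitive_decomposition (int_pt_cross Iu Iv) (lin_indep2_cross li).
exists n, h; split => // x.
have N'p : dot N' (p - q') = 0 by apply/inP.
rewrite /= inP (_ : x - q' = (x - p) + (p - q')); last by vec_ring.
rewrite dotDr N'p addr0 orth NE dotZl dotBr.
have g0 : (g%:R : R) != 0 by rewrite pnatr_eq0 -lt0n.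
split => [/eqP|->]; last by rewrite subrr mulr0.
by rewrite mulf_eq0 (negbTE g0) subr_eq0 => /eqP.
Qed.

Lemma plane_levelB (P : set vec) n p : (forall x, P x <-> dot n x = dot n p) ->
  forall x, P x <-> dot n (x - p) = 0.
Proof.
move=> HP x; rewrite HP dotBr.
by split => [->|/eqP]; [rewrite subrr | rewrite subr_eq0 => /eqP].
Qed.

Lemma int_vecs_in_plane (P : set vec) n p : int_pt p ->
  (forall x, P x <-> dot n x = dot n p) ->
  forall w, int_vecs_in P w <-> int_pt w /\ dot n w = 0.
Proof.
move=> Ip HP w; split => [[x [y [/HP nx [/HP ny [Ix [Iy ->]]]]]]|[Iw nw]].
  by split; [exact: int_ptB | rewrite dotBr nx ny subrr].
exists (p + w), p; split; first by apply/HP; rewrite dotDr nw addr0.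
by do !split => //; [exact/HP | exact: int_ptD | rewrite addrC addKr].
Qed.

Lemma line_through_endpoints (p q : vec) : line_through p q p /\ line_through p q q.
Proof. by split; [exists 0 | exists 1]; vec_ring. Qed.

(** * Indices of level sublattices *)

Section LatticeIndex.
Variables (L M : set vec).
Hypothesis subM : forall x y, M x -> M y -> M (x - y).
Hypothesis subL : forall x y, M x -> M y -> L x -> L y -> L (x - y).

Lemma is_index_uniq n m : is_index L M n -> is_index L M m -> n = m.
Proof.
suff le_index n' m' : is_index L M n' -> is_index L M m' -> (n' <= m')%N.
  by move=> Mn Mm; apply/eqP; rewrite eqn_leq !le_index.
move=> [r [Mr Hr]] [r' [Mr' Hr']].
have ex i : exists j, L (r i - r' j).
  by have [j [Lj _]] := Hr' (r i) (Mr i); exists j.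
have [phi Hphi] := choice ex.
suff : injective phi by move/leq_card; rewrite !card_ord.
move=> i i' e.
have M1 : M (r i - r' (phi i)) by apply: subM.
have M2 : M (r i' - r' (phi i)) by apply: subM.
have L2 : L (r i' - r' (phi i)) by rewrite e; apply: Hphi.
have Lii : L (r i - r i).
  by rewrite subrr -(subrr (r i - r' (phi i))); apply: subL.
have Lii' : L (r i - r i').
  by rewrite (_ : r i - r i' = (r i - r' (phi i)) - (r i' - r' (phi i)));
    [apply: subL | vec_ring].
have [k [_ uk]] := Hr (r i) (Mr i).
by rewrite -(uk _ Lii) -(uk _ Lii').
Qed.

End LatticeIndex.

Definition int_multiple (c x : R) : Prop := exists z : int, x = z%:~R * c.

Lemma int_multiple_norm c x : int_multiple `|c| x <-> int_multiple c x.
Proof.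
have [c_ge0|c_lt0] := lerP 0 c; first by rewrite ger0_norm.
rewrite ltr0_norm //; split => -[z ->]; exists (- z); rewrite intrN; ring.
Qed.

Lemma int_multiple_nat (k : nat) (z : int) : int_multiple k%:R z%:~R <-> (k %| z)%Z.
Proof.
split => [[w /eqP]|/dvdzP[w ->]]; last by exists w; rewrite intrM.
by rewrite -[k%:R]/((k : int)%:~R) -intrM eqr_int => /eqP ->; apply/dvdz_mull/dvdzz.
Qed.

Section LevelLattice.
Variables (n h : vec).
Hypotheses (In : int_pt n) (Ih : int_pt h) (nh : dot n h = 1).

(* the representatives [0, h, ..., (k-1) h] hit every level of [n] modulo [k] once *)
Lemma is_index_level (L M : set vec) (k : nat) : (0 < k)%N ->
  (forall x, M x <-> int_pt x) ->
  (forall x, int_pt x -> L x <-> int_multiple k%:R (dot n x)) ->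
  is_index L M k.
Proof.
move=> k_gt0 HM HL.
exists (fun i : 'I_k => (i : nat)%:R *: h); split.
  by move=> i; apply/HM/int_ptZ => //; apply: natr_int.
move=> m /HM Im.
have /intrP[t ht] := int_dot In Im.
have Lshift (j : nat) : L (m - j%:R *: h) <-> (k %| t - j%:Z)%Z.
  rewrite HL; last by apply/int_ptB/int_ptZ => //; apply: natr_int.
  by rewrite dotBr dotZr nh mulr1 ht -[j%:R]/((j : int)%:~R) -intrB int_multiple_nat.
have k0 : (k : int) != 0 by rewrite eqz_nat -lt0n.
pose T := (t %% k)%Z.
have T_ge0 : 0 <= T by apply: modz_ge0.
have absT : (`|T|%N : int) = T by rewrite gez0_abs.
have T_lt : (`|T| < k)%N by rewrite -ltz_nat absT ltz_pmod // ltz_nat.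
exists (Ordinal T_lt); split.
  by apply/Lshift; rewrite /= absT {1}(divz_eq t k) addrK; apply/dvdz_mull/dvdzz.
move=> j /Lshift; rewrite -eqz_mod_dvd [X in _ == X]modz_small; last first.
  by rewrite ltz_nat ltn_ord andbT.
by move=> /eqP jE; apply: val_inj; apply/eqP; rewrite /= -eqz_nat absT /T jE.
Qed.

Lemma lat_index_level (L M : set vec) (c : R) : c \is a Num.int -> c != 0 ->
  (forall x, M x <-> int_pt x) ->
  (forall x, int_pt x -> L x <-> int_multiple c (dot n x)) ->
  (lat_index L M)%:R = `|c|.
Proof.
move=> /intrP[z ->] c0 HM HL.
set k := `|z|%N.
have kE : `|z%:~R| = k%:R :> R by rewrite natr_absz intr_norm.
have k_gt0 : (0 < k)%N by rewrite absz_gt0; apply: contra c0 => /eqP ->.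
have HLk x : int_pt x -> L x <-> int_multiple k%:R (dot n x).
  by move=> Ix; rewrite -kE int_multiple_norm HL.
have subM x y : M x -> M y -> M (x - y) by move=> /HM ? /HM ?; apply/HM/int_ptB.
have subL x y : M x -> M y -> L x -> L y -> L (x - y).
  move=> /HM Ix /HM Iy /(HLk _ Ix)[a ha] /(HLk _ Iy)[b hb].
  apply/HLk; first exact: int_ptB.
  by exists (a - b); rewrite dotBr ha hb intrB mulrBl.
rewrite kE; congr (_%:R); apply: xget_unique => [|m Hm].
  exact: is_index_level.
exact: (is_index_uniq subM subL Hm (is_index_level k_gt0 HM HLk)).
Qed.

End LevelLattice.

Lemma zspan_ind (S Q : set vec) : Q 0 -> (forall x y, Q x -> Q y -> Q (x + y)) ->
  (forall x z, Q x -> Q (x *~ z)) -> (forall x, S x -> Q x) ->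
  forall x, zspan S x -> Q x.
Proof.
move=> Q0 QD QZ SQ x [n [c [w [Sw ->]]]].
by apply: (big_ind Q) => // i _; apply/QZ/SQ.
Qed.

Lemma zspan2 (S : set vec) a b (i j : int) : S a -> S b -> zspan S (a *~ i + b *~ j).
Proof.
move=> Sa Sb.
exists 2%N, (fun k : 'I_2 => if val k == 0%N then i else j),
  (fun k : 'I_2 => if val k == 0%N then a else b); split; first by case=> [[|[|]]].
by rewrite !big_ord_recl big_ord0 /= addr0.
Qed.

Lemma zspan_level (S : set vec) n c v0 :
  (forall v, S v -> int_pt v /\ int_multiple c (dot n v)) ->
  S v0 -> dot n v0 = c ->
  (forall w, int_pt w -> dot n w = 0 -> S w) ->
  forall x, int_pt x -> zspan S x <-> int_multiple c (dot n x).
Proof.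
move=> HS Sv0 nv0 Sorth x Ix; split.
  apply: (zspan_ind (Q := fun v => int_multiple c (dot n v))).
  - by exists 0; rewrite dot0r mul0r.
  - by move=> y z [a ha] [b hb]; exists (a + b); rewrite dotDr ha hb intrD mulrDl.
  - by move=> y z [a ha]; exists (z * a); rewrite -scaler_int dotZr ha intrM mulrA.
  - by move=> v /HS[].
move=> [z hz].
rewrite (_ : x = (x - z%:~R *: v0) *~ 1 + v0 *~ z); last first.
  by rewrite mulr1z -scaler_int subrK.
apply: zspan2 => //; apply: Sorth.
  apply: int_ptB => //; apply: int_ptZ; [exact: intr_int | exact: (HS _ Sv0).1].
by rewrite dotBr dotZr nv0 hz subrr.
Qed.

Lemma aff_span_comb4 (S : set vec) x0 x1 x2 x3 (s0 s1 s2 s3 : R) :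
  S x0 -> S x1 -> S x2 -> S x3 -> s0 + s1 + s2 + s3 = 1 ->
  aff_span S (s0 *: x0 + s1 *: x1 + s2 *: x2 + s3 *: x3).
Proof.
move=> S0 S1 S2 S3 s1E.
exists 4%N, (fun i : 'I_4 => nth 0 [:: s0; s1; s2; s3] i),
  (fun i : 'I_4 => nth 0 [:: x0; x1; x2; x3] i); split; first by case=> [[|[|[|[|]]]]].
by rewrite !big_ord_recl !big_ord0 /= !addr0 !addrA.
Qed.

Lemma aff_span_full (S : set vec) q a b c : S q -> S (q + a) -> S (q + b) -> S (q + c) ->
  triple a b c != 0 -> forall x, aff_span S x.
Proof.
move=> Sq Sa Sb Sc D0 x.
have := cramer a b c (x - q).
set sa := triple (x - q) b c; set sb := triple a (x - q) c; set sc := triple a b (x - q).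
set D := triple a b c in D0 * => H.
have -> : x = (1 - (sa + sb + sc) / D) *: q + (sa / D) *: (q + a)
            + (sb / D) *: (q + b) + (sc / D) *: (q + c).
  rewrite -[LHS](subrK q) -[x - q](scalerK D0) H.
  apply: vec3P; coords; field; exact: D0.
apply: aff_span_comb4 => //; field; exact: D0.
Qed.

Lemma span_int_lattice_full (S : set vec) : (forall x, aff_span S x) ->
  forall x, span_int_lattice S x <-> int_pt x.
Proof.
move=> full x; split => [[]//|Ix]; split => //.
by exists x, 0; rewrite subr0.
Qed.

(** * Integer length, distance and sine *)

Lemma has_card_uniq (S : set vec) n m : has_card S n -> has_card S m -> n = m.
Proof.
suff le_card n' m' : has_card S n' -> has_card S m' -> (n' <= m')%N.
  by move=> Sn Sm; apply/eqP; rewrite eqn_leq !le_card.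
move=> [f [f_inj f_range]] [f' [_ f'_range]].
have ex i : exists j, f' j = f i.
  have : S (f i) by rewrite -f_range; exists i.
  by rewrite -f'_range => -[j _ <-]; exists j.
have [phi Hphi] := choice ex.
have : injective phi by move=> i j e; apply: f_inj; rewrite -Hphi e Hphi.
by move/leq_card; rewrite !card_ord.
Qed.

Section PrimitiveSegment.
Variables (p e f : vec) (g : nat).
Hypotheses (Ip : int_pt p) (Ie : int_pt e) (If : int_pt f) (ef : dot e f = 1).
Hypothesis g_gt0 : (0 < g)%N.

Lemma open_seg_int_ptsE x : open_seg_int_pts p (p + g%:R *: e) x <->
  exists2 i : nat, (0 < i < g)%N & x = p + i%:R *: e.
Proof.
have gR : (0 : R) < g%:R by rewrite ltr0n.
rewrite /open_seg_int_pts /= (_ : p + g%:R *: e - p = g%:R *: e); last first.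
  by rewrite addrC addKr.
split => [[Ix [t [/andP[t0 t1] xE]]] | [i /andP[i0 ig] ->]].
  subst x; have : dot (t *: (g%:R *: e)) f \is a Num.int.
    apply: int_dot => //.
    rewrite (_ : t *: (g%:R *: e) = p + t *: (g%:R *: e) - p); first exact: int_ptB.
    by rewrite addrC addKr.
  rewrite !dotZl ef mulr1 => /intrP[m hm].
  have m_gt0 : 0 < m by rewrite -(@ltr0z R) -hm mulr_gt0.
  have m_ltg : m < g by rewrite -(@ltr_int R) -hm /= gtr_pMl.
  case: m hm m_gt0 m_ltg => // i hm i0 ig.
  by exists i; [rewrite -!ltz_nat i0 | rewrite scalerA hm].
split; first by apply/int_ptD/int_ptZ => //; apply: natr_int.
exists (i%:R / g%:R); split; last by rewrite scalerA mulfVK // gt_eqF.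
by rewrite divr_gt0 ?ltr0n //= ltr_pdivrMr // mul1r ltr_nat.
Qed.

Lemma Il_primitive : Il p (p + g%:R *: e) = g.
Proof.
have HC : has_card (open_seg_int_pts p (p + g%:R *: e)) g.-1.
  exists (fun i : 'I_g.-1 => p + (i : nat).+1%:R *: e); split.
    move=> i j /(congr1 (dot^~ f)); rewrite /= !dotDl !dotZl ef !mulr1 => /addrI /eqP.
    by rewrite eqr_nat eqSS => /eqP /val_inj.
  apply/seteqP; split => x.
    move=> [i _ <-]; apply/open_seg_int_ptsE; exists i.+1 => //.
    by move: (ltn_ord i); rewrite /= -ltnS prednK.
  move=> /open_seg_int_ptsE[i /andP[i0 ig] ->].
  have i_lt : (i.-1 < g.-1)%N by rewrite -ltnS !prednK.
  by exists (Ordinal i_lt) => //=; rewrite prednK.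
rewrite /Il (xget_unique _ HC) ?prednK // => m Hm.
exact: has_card_uniq Hm HC.
Qed.

End PrimitiveSegment.

Lemma Id_origin_plane (P : set vec) n h p : int_pt n -> int_pt h -> dot n h = 1 ->
  int_pt p -> (forall x, P x <-> dot n x = dot n p) -> ~ P 0 ->
  (Id 0 P)%:R = `|dot n p|.
Proof.
move=> In Ih nh Ip HP P0.
have c0 : dot n p != 0 by apply/eqP => c0; apply/P0/HP; rewrite dot0r c0.
set S := [set 0] `|` P.
have level u : S u -> int_multiple (dot n p) (dot n u).
  by case=> [->|/HP ->]; [exists 0; rewrite dot0r mul0r | exists 1; rewrite mul1r].
(* [x] is an affine combination of [0], [p] and the point [p + x - d p] of [P] *)
have full x : aff_span S x.
  set d := dot n x / dot n p.
  have -> : x = 1 *: (p + x - d *: p) + (d - 1) *: p + (1 - d) *: 0 + 0 *: 0 by vec_ring.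
  apply: aff_span_comb4; [right | right | left | left | ring] => //.
  - by apply/HP; rewrite dotBr dotDr dotZr divfK // addrK.
  - exact/HP.
rewrite /Id; apply: (lat_index_level In Ih nh) => //.
- exact: int_dot.
- exact: span_int_lattice_full.
apply: (zspan_level (v0 := p)) => //.
- move=> v [x [y [/level[a ha] [/level[b hb] [Ix [Iy ->]]]]]].
  by split; [exact: int_ptB | exists (a - b); rewrite dotBr ha hb intrB mulrBl].
- exists p, 0; split; first by right; apply/HP.
  by split; [left | do !split => //; [exact: int_pt0 | rewrite subr0]].
move=> w Iw nw.
have [x [y [Px [Py rest]]]] := (int_vecs_in_plane Ip HP w).2 (conj Iw nw).
by exists x, y; split; [right | split; [right |]].
Qed.

Section TwoPlanes.
Variables (P1 P2 : set vec) (p n1 h1 n2 h2 e f : vec).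
Hypotheses (Ip : int_pt p) (Ie : int_pt e) (If : int_pt f).
Hypotheses (In1 : int_pt n1) (Ih1 : int_pt h1) (In2 : int_pt n2) (Ih2 : int_pt h2).
Hypotheses (n1h1 : dot n1 h1 = 1) (n2h2 : dot n2 h2 = 1) (ef : dot e f = 1).
Hypotheses (n1e : dot n1 e = 0) (n2e : dot n2 e = 0).
Hypothesis P1E : forall x, P1 x <-> dot n1 x = dot n1 p.
Hypothesis P2E : forall x, P2 x <-> dot n2 x = dot n2 p.

Lemma not_in_plane2_neq0 x : P1 x -> ~ P2 x ->
  triple h1 e (x - p) != 0 /\ dot n2 (cross n1 f) != 0.
Proof.
move=> /(plane_levelB P1E) P1x nP2x; apply: (dot_orth_basis_neq0 n1e) => //.
by apply/eqP => /(plane_levelB P2E).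
Qed.

Lemma not_in_plane1_neq0 x : P2 x -> ~ P1 x ->
  triple h2 e (x - p) != 0 /\ dot n1 (cross n2 f) != 0.
Proof.
move=> /(plane_levelB P2E) P2x nP1x; apply: (dot_orth_basis_neq0 n2e) => //.
by apply/eqP => /(plane_levelB P1E).
Qed.

Lemma Isin_two_planes : dot n1 (cross n2 f) != 0 ->
  (Isin P1 P2)%:R = `|dot n1 (cross n2 f)|.
Proof.
move=> cI0.
have P1p : P1 p by apply/P1E.
(* [e] and [n1 x f] span the direction of [P1], and [n2 x f] leaves it *)
have full x : aff_span (P1 `|` P2) x.
  apply: (aff_span_full (q := p) (a := e) (b := cross n1 f) (c := cross n2 f)).
  - by left.
  - by left; apply/P1E; rewrite dotDr n1e addr0.
  - by left; apply/P1E; rewrite dotDr dot_crossl addr0.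
  - by right; apply/P2E; rewrite dotDr dot_crossl addr0.
  rewrite triple_cyclic (triple_orth _ n1e (dot_crossl n1 f) n1h1).
  by rewrite (triple_orth_basis n1e n1h1 ef) mulr1.
rewrite /Isin; apply: (lat_index_level In1 Ih1 n1h1) => //.
- by apply/int_dot/int_pt_cross.
- exact: span_int_lattice_full.
apply: (zspan_level (v0 := cross n2 f)) => //.
- move=> v [/(int_vecs_in_plane Ip P1E)[Iv nv] | /(int_vecs_in_plane Ip P2E)[Iv nv]].
    by split => //; exists 0; rewrite nv mul0r.
  have /intrP[z hz] := int_triple Ih2 Ie Iv.
  by split => //; exists z; rewrite (dot_orth_basis n2e n2h2 ef n1e nv) hz.
- right; apply/(int_vecs_in_plane Ip P2E); split; last exact: dot_crossl.
  exact: int_pt_cross.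
by move=> w Iw nw; left; apply/(int_vecs_in_plane Ip P1E).
Qed.

Lemma omega_two_planes (g : R) p3 p4 : g != 0 -> ~ P1 0 -> ~ P2 0 ->
  P1 p3 -> ~ P2 p3 -> P2 p4 -> ~ P1 p4 ->
  omega p (p + g *: e) p3 p4 = dot n1 (cross n2 f) / (g * dot n1 p * dot n2 p).
Proof.
move=> g0 nP10 nP20 P3 nP3 P4 nP4.
have c1 : dot n1 p != 0 by apply/eqP => c0; apply/nP10/P1E; rewrite dot0r c0.
have c2 : dot n2 p != 0 by apply/eqP => c0; apply/nP20/P2E; rewrite dot0r c0.
have [t3 _] := not_in_plane2_neq0 P3 nP3.
have [t4 _] := not_in_plane1_neq0 P4 nP4.
have n1w3 := (plane_levelB P1E p3).1 P3.
have n2w4 := (plane_levelB P2E p4).1 P4.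
have n1w4 := dot_orth_basis n2e n2h2 ef n1e n2w4.
have shift x : x = p + (x - p) by rewrite subrKC.
have det_p3 : det3 p (p + g *: e) p3 = g * dot n1 p * triple h1 e (p3 - p).
  rewrite det3E [in LHS](shift p3) triple_shift triple_Zm.
  by rewrite (triple_orth p n1e n1w3 n1h1) mulrA.
have det_p4 : det3 p (p + g *: e) p4 = g * dot n2 p * triple h2 e (p4 - p).
  rewrite det3E [in LHS](shift p4) triple_shift triple_Zm.
  by rewrite (triple_orth p n2e n2w4 n2h2) mulrA.
have det_num : det3 (p + g *: e - p) (p3 - p) (p4 - p) =
    g * (triple h2 e (p4 - p) * dot n1 (cross n2 f)) * triple h1 e (p3 - p).
  rewrite det3E addrC addKr triple_Zl triple_cyclic.
  by rewrite (triple_orth (p4 - p) n1e n1w3 n1h1) n1w4 mulrA.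
by rewrite /omega det_p3 det_p4 det_num; field; rewrite ?g0 ?c1 ?c2 ?t3 ?t4.
Qed.

End TwoPlanes.

End IntegerPlanes.

Theorem proposition4p3 (R : realType) (p1 p2 p3 p4 : 'rV[R]_3)
    (pi1 pi2 : set 'rV[R]_3) :
  int_pt p1 -> int_pt p2 -> p1 <> p2 ->
  integer_plane pi1 -> integer_plane pi2 -> pi1 <> pi2 ->
  line_through p1 p2 `<=` pi1 -> line_through p1 p2 `<=` pi2 ->
  ~ pi1 0 -> ~ pi2 0 ->
  pi1 p3 -> ~ pi2 p3 -> pi2 p4 -> ~ pi1 p4 ->
  `|omega p1 p2 p3 p4| =
    (Isin pi1 pi2)%:R / ((Il p1 p2)%:R * (Id 0 pi1)%:R * (Id 0 pi2)%:R).
Proof.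
move=> Ip1 Ip2 p12 Hpi1 Hpi2 _ L1 L2 nP10 nP20 P3 nP3 P4 nP4.
have [l1 l2] := line_through_endpoints p1 p2.
have [n1 [h1 [In1 Ih1 n1h1 E1]]] := integer_plane_normal Hpi1 (L1 _ l1).
have [n2 [h2 [In2 Ih2 n2h2 E2]]] := integer_plane_normal Hpi2 (L2 _ l1).
have p21 : p2 - p1 != 0 by rewrite subr_eq0; apply/eqP => /esym.
have [g [e [f [g_gt0 Ie If p21E ef]]]] := primitive_decomposition (int_ptB Ip2 Ip1) p21.
have g0 : (g%:R : R) != 0 by rewrite pnatr_eq0 -lt0n.
have p2E : p2 = p1 + g%:R *: e by rewrite -p21E subrKC.
have orth_e n : dot n p2 = dot n p1 -> dot n e = 0.
  move=> h; have : g%:R * dot n e = 0 by move: h; rewrite p2E dotDr dotZr; lra.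
  by move/eqP; rewrite mulf_eq0 (negbTE g0) => /eqP.
have n1e := orth_e n1 ((E1 p2).1 (L1 _ l2)).
have n2e := orth_e n2 ((E2 p2).1 (L2 _ l2)).
have [_ cI0] := not_in_plane1_neq0 n2h2 ef n1e n2e E1 E2 P4 nP4.
rewrite p2E (omega_two_planes n1h1 n2h2 ef n1e n2e E1 E2 g0 nP10 nP20 P3 nP3 P4 nP4).
rewrite (Isin_two_planes Ip1 Ie If In1 Ih1 In2 Ih2 n1h1 n2h2 ef n1e n2e E1 E2 cI0).
rewrite (Il_primitive Ip1 Ie If ef g_gt0).
rewrite (Id_origin_plane In1 Ih1 n1h1 Ip1 E1 nP10) (Id_origin_plane In2 Ih2 n2h2 Ip1 E2 nP20).
by rewrite normf_div !normrM normr_nat.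
Qed.
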